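(* For every $\alpha\in(0,1)$, neither $\overline{D}_\alpha^{\mathrm{test}}$ nor $\hat D_\alpha^{\mathrm{test}}$ is a quantum Rényi $\alpha$-divergence; that is, for each of these two functions (defined on $\bigcup_{d\in\mathbb N}\mathcal S(\mathbb C^d)\times\mathcal S(\mathbb C^d)$), it is not the case that it is both invariant under isometries and equal to the classical Rényi $\alpha$-divergence on every pair of commuting states.
   Context: $\mathcal S(\mathbb C^d)$ denotes the set of density operators on $\mathbb C^d$. A function $D^q_\alpha$ on $\bigcup_d\mathcal S(\mathbb C^d)\times\mathcal S(\mathbb C^d)$ is a quantum Rényi $\alpha$-divergence if $D_\alpha^q(V\varrho V^*\|V\sigma V^* )=D^q_\alpha(\varrho\|\sigma)$ for all isometries $V:\mathbb C^d\to\mathbb C^{d'}$, and whenever $\varrho=\sum_i p_i|i\rangle\langle i|$, $\sigma=\sum_i q_i|i\rangle\langle i|$ are diagonal in a common orthonormal basis, $D^q_\alpha(\varrho\|\sigma)=\frac{1}{\alpha-1}\log\sum_i p_i^\alpha q_i^{1-\alpha}$. A test is an operator $0\le T\le I$; $\mathcal T(X):=(\operatorname{Tr}XT,\operatorname{Tr}X(I-T))$; $D_\alpha^{\mathrm{test}}(\varrho\|\sigma):=\max_{0\le T\le I}D_\alpha(\mathcal T(\varrho)\|\mathcal T(\sigma))$ with $D_\alpha$ the classical Rényi divergence of the two-point distributions; $\overline{D}_\alpha^{\mathrm{test}}(\varrho\|\sigma):=\limsup_{n}\frac1n D_\alpha^{\mathrm{test}}(\varrho^{\otimes n}\|\sigma^{\otimes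 n})$ and $\hat D_\alpha^{\mathrm{test}}(\varrho\|\sigma):=\sup_{n}\frac1n D_\alpha^{\mathrm{test}}(\varrho^{\otimes n}\|\sigma^{\otimes n})$. *)

From HB Require Import structures.
From mathcomp Require Import all_boot all_order all_algebra.
From mathcomp Require Import all_classical all_reals.
From mathcomp Require Import ereal topology normedtype sequences exp.
From mathcomp.real_closed Require Import complex mxtens.
Set Implicit Arguments. Unset Strict Implicit. Unset Printing Implicit Defensive.
Import Order.TTheory GRing.Theory Num.Theory.
Local Open Scope ring_scope.
Local Open Scope classical_set_scope.

Section QuantumRenyi.
Variable R : realType.
Local Notation C := R[i].

Definition adj m n (A : 'M[C]_(m, n)) : 'M[C]_(n, m) := (map_mx conjc A)^T.

Definition psd n (A : 'M[C]_n) : Prop :=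
  forall v : 'cV[C]_n, 0 <= (adj v *m A *m v) 0 0.

Definition density n (rho : 'M[C]_n) : Prop := psd rho /\ \tr rho = 1.

Definition test n (T : 'M[C]_n) : Prop := psd T /\ psd (1%:M - T).

Definition isometry d d' (V : 'M[C]_(d', d)) : Prop := adj V *m V = 1%:M.

Definition RC (x : R) : C := Complex x 0.

Definition diagR d (p : 'I_d -> R) : 'M[C]_d := diag_mx (\row_i RC (p i)).

Definition renyi (alpha : R) k (p q : 'I_k -> R) : \bar R :=
  let s := \sum_(i < k) (p i `^ alpha * q i `^ (1 - alpha)) in
  if ((alpha < 1) && (s == 0)) ||
     ((1 < alpha) && [exists i, (p i != 0) && (q i == 0)])
  then +oo%E
  else ((alpha - 1)^-1 * ln s)%:E.

Definition meas n (T X : 'M[C]_n) : 'I_2 -> R :=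
  fun i => if i == ord0 then complex.Re (\tr (X *m T)) else complex.Re (\tr (X *m (1%:M - T))).

(* D_alpha^test: max over tests (written as a supremum, which is attained) *)
Definition Dtest (alpha : R) n (rho sigma : 'M[C]_n) : \bar R :=
  ereal_sup [set renyi alpha (meas T rho) (meas T sigma) | T in @test n].

(* regularizations, with the n-th term (1/n) D^test(rho^{(x)n} || sigma^{(x)n}), n >= 1 *)
Definition Dtest_term (alpha : R) d (rho sigma : 'M[C]_d) (n : nat) : \bar R :=
  ((n.+1%:R)^-1)%:E * Dtest alpha (rho ^t n.+1) (sigma ^t n.+1).

Definition Dbar_test (alpha : R) d (rho sigma : 'M[C]_d) : \bar R :=
  limn_esup (Dtest_term alpha rho sigma).

Definition Dhat_test (alpha : R) d (rho sigma : 'M[C]_d) : \bar R :=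
  ereal_sup [set Dtest_term alpha rho sigma n | n in [set: nat]].

Definition quantum_renyi (alpha : R)
    (D : forall d : nat, 'M[C]_d -> 'M[C]_d -> \bar R) : Prop :=
  (forall d d' (V : 'M[C]_(d', d)) (rho sigma : 'M[C]_d),
      isometry V -> density rho -> density sigma ->
      D d' (V *m rho *m adj V) (V *m sigma *m adj V) = D d rho sigma) /\
  (forall d (U : 'M[C]_d) (p q : 'I_d -> R),
      adj U *m U = 1%:M ->
      density (U *m diagR p *m adj U) -> density (U *m diagR q *m adj U) ->
      D d (U *m diagR p *m adj U) (U *m diagR q *m adj U) = renyi alpha p q).

End QuantumRenyi.

From HB Require Import structures.
From mathcomp Require Import all_boot all_order all_algebra.
From mathcomp Require Import all_classical all_reals.
From mathcomp Require Import ereal topology normedtype sequences exp.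
From mathcomp.real_closed Require Import complex mxtens.
From mathcomp Require Import ring lra.
Set Implicit Arguments. Unset Strict Implicit. Unset Printing Implicit Defensive.
Import Order.TTheory GRing.Theory Num.Theory.
Local Open Scope ring_scope.

(* Compare the commuting states rho = diag(1 - w, w, 0) and sigma = diag(0, w, 1 - w):
   their Renyi divergence is ln w / (alpha - 1) = ln (1/w) / (1 - alpha).  If T is a
   test and t is its diagonal entry at the shared index, both Tr (rho T) and
   Tr (sigma T) lie in [w t, 1 - w (1 - t)], so for one of the two outcomes the
   product of the probabilities is at least w/4; hence
   D^test <= m ln (4/w) / (1 - alpha) with m = max(alpha, 1 - alpha) < 1.
   The n-fold tensor powers are again diagonal and share the mass w^n at one index,
   so (1/n) D^test(rho^n || sigma^n) <= m ln (4/w) / (1 - alpha) for every n, which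
   is strictly below ln (1/w) / (1 - alpha) once w is small. *)

Section RealBounds.
Variable R : realType.

Lemma ge0_ger_powR (x r s : R) : 0 <= x <= 1 -> 0 < r <= s -> x `^ s <= x `^ r.
Proof.
move=> /andP[x0 x1] /andP[r0 rs].
have [->|xn0] := eqVneq x 0; first by rewrite !powR0 ?gt_eqF // (lt_le_trans r0).
by apply: ger_powR => //; rewrite lt_neqAle eq_sym xn0 x0.
Qed.

Lemma powRM_le_weighted (x y a m : R) : 0 <= x <= 1 -> 0 <= y <= 1 -> 0 < a < 1 ->
  a <= m -> 1 - a <= m -> (x * y) `^ m <= x `^ a * y `^ (1 - a).
Proof.
move=> /andP[x0 x1] /andP[y0 y1] /andP[a0 a1] am bm.
rewrite powRM //; apply: ler_pM; rewrite ?powR_ge0 //; apply: ge0_ger_powR;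
  by apply/andP; split => //; rewrite subr_gt0.
Qed.

Definition bern (a : R) : 'I_2 -> R := fun i => if i == ord0 then a else 1 - a.

Lemma quarter_le_mul_or_mul_compl (u v a b : R) : 0 <= u -> 0 <= v ->
  u <= a <= 1 - v -> u <= b <= 1 - v ->
  (u + v) / 4 <= a * b \/ (u + v) / 4 <= (1 - a) * (1 - b).
Proof.
move=> u0 v0 /andP[ua av] /andP[ub bv].
have [a2|a2] := lerP (1/2) a; have [b2|b2] := lerP (1/2) b;
  have [vu|uv] := lerP v u; (by left; nra) || (by right; nra).
Qed.

Lemma renyi_bern_le (alpha u v a b : R) : 0 < alpha < 1 -> 0 <= u -> 0 <= v ->
  0 < u + v -> u <= a <= 1 - v -> u <= b <= 1 - v ->
  (renyi alpha (bern a) (bern b) <=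
    ((alpha - 1)^-1 * (Num.max alpha (1 - alpha) * ln ((u + v) / 4)))%:E)%E.
Proof.
move=> /andP[a0 a1] u0 v0 uv0 ha hb.
set m := Num.max alpha (1 - alpha); set w := (u + v) / 4.
have am : alpha <= m by rewrite le_max lexx.
have bm : 1 - alpha <= m by rewrite le_max lexx orbT.
have w0 : 0 < w by rewrite divr_gt0.
have m0 : 0 <= m by rewrite (le_trans _ am) ?ltW.
have in01 x : u <= x <= 1 - v -> 0 <= x <= 1 /\ 0 <= 1 - x <= 1 by lra.
have [[a01 a'01] [b01 b'01]] := (in01 a ha, in01 b hb).
have pow_le x y : 0 <= x <= 1 -> 0 <= y <= 1 -> w <= x * y ->
    w `^ m <= x `^ alpha * y `^ (1 - alpha).
  move=> x01 y01 wxy; apply: le_trans (powRM_le_weighted x01 y01 _ am bm); last lra.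
  apply: ge0_ler_powR => //; rewrite nnegrE ?(ltW w0) //.
  by case/andP: x01 => x0 _; case/andP: y01 => y0 _; rewrite mulr_ge0.
have s_ge : w `^ m <=
    a `^ alpha * b `^ (1 - alpha) + (1 - a) `^ alpha * (1 - b) `^ (1 - alpha).
  have pge0 x y : 0 <= x `^ alpha * y `^ (1 - alpha) by rewrite mulr_ge0 ?powR_ge0.
  have [wab|wab] := quarter_le_mul_or_mul_compl u0 v0 ha hb.
  - by rewrite -[leLHS]addr0; apply: lerD; [exact: pow_le|exact: pge0].
  - by rewrite -[leLHS]add0r; apply: lerD; [exact: pge0|exact: pow_le].
have s0 := lt_le_trans (powR_gt0 m w0) s_ge.
rewrite /renyi !big_ord_recl big_ord0 /bern /= addr0 (gt_eqF s0) andbF /=.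
rewrite ltNge (ltW a1) /= lee_fin.
apply: ler_wnM2l; first by rewrite invr_le0 subr_le0 ltW.
by rewrite -ln_powR ler_ln ?posrE ?powR_gt0.
Qed.

End RealBounds.

Section DiagonalStates.
Variable R : realType.
Local Notation C := R[i].

Definition distribution N (P : 'I_N -> R) := (forall i, 0 <= P i) /\ \sum_i P i = 1.

Lemma Re_sum N (F : 'I_N -> C) : complex.Re (\sum_i F i) = \sum_i complex.Re (F i).
Proof. by apply: big_morph => [[x1 x2] [y1 y2]|]. Qed.

Lemma Im_sum N (F : 'I_N -> C) : complex.Im (\sum_i F i) = \sum_i complex.Im (F i).
Proof. by apply: big_morph => [[x1 x2] [y1 y2]|]. Qed.

Lemma Re_mxtrace_diagR_mul N (P : 'I_N -> R) (T : 'M[C]_N) :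
  complex.Re (\tr (diagR P *m T)) = \sum_i P i * complex.Re (T i i).
Proof.
rewrite /diagR mul_diag_mx /mxtrace Re_sum; apply: eq_bigr => i _.
by rewrite !mxE /RC; case: (T i i) => x y /=; rewrite mul0r subr0.
Qed.

Lemma Re_mxtrace_diagR N (P : 'I_N -> R) : complex.Re (\tr (diagR P)) = \sum_i P i.
Proof. by rewrite mxtrace_diag Re_sum; apply: eq_bigr => i _; rewrite mxE. Qed.

Lemma adj1mx n : adj (1%:M : 'M[C]_n) = 1%:M.
Proof. by apply/matrixP => i j; rewrite !mxE conjc_nat eq_sym. Qed.

Lemma psd_diag_ge0 N (A : 'M[C]_N) i : psd A -> 0 <= A i i.
Proof.
move=> /(_ (delta_mx i ord0)).
have -> : adj (delta_mx i ord0 : 'cV[C]_N) = delta_mx ord0 i.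
  by apply/matrixP => j k; rewrite !mxE conjc_nat andbC.
by rewrite -rowE -colE !mxE.
Qed.

Lemma Re_test_diag_in01 N (T : 'M[C]_N) i : test T -> 0 <= complex.Re (T i i) <= 1.
Proof.
move=> [/(psd_diag_ge0 i) T0 /(psd_diag_ge0 i)].
rewrite !mxE eqxx mulr1n !lecE; move: T0; case: (T i i) => x y /=.
by move=> /andP[_ x0] /andP[_ x1]; rewrite x0 -subr_ge0.
Qed.

Lemma density_diagR N (P : 'I_N -> R) : distribution P -> density (diagR P).
Proof.
move=> [P0 P1]; split.
  move=> v; rewrite /diagR mul_mx_diag mxE; apply: sumr_ge0 => j _.
  rewrite !mxE /RC; have := P0 j; case: (v j 0) => x y /= Pj0.
  rewrite lecE /=; apply/andP; split; first by apply/eqP; ring.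
  have -> : (x * P j - - y * 0) * x - (x * 0 + - y * P j) * y =
            P j * (x * x + y * y) by ring.
  by apply: mulr_ge0 => //; nra.
apply/eqP; rewrite mxtrace_diag eq_complex Re_sum Im_sum /=.
under eq_bigr do rewrite mxE.
under [X in _ && (X == _)]eq_bigr do rewrite mxE.
by rewrite /RC /= P1 eqxx big1_eq eqxx.
Qed.

Lemma quantum_renyi_diagR alpha D N (P Q : 'I_N -> R) :
  quantum_renyi alpha D -> distribution P -> distribution Q ->
  D N (diagR P) (diagR Q) = renyi alpha P Q.
Proof.
move=> [_ Dclassical] /density_diagR dP /density_diagR dQ.
have := Dclassical N 1%:M P Q; rewrite adj1mx !mul1mx !mulmx1; exact.
Qed.

End DiagonalStates.

Section TestBound.
Variable R : realType.
Local Notation C := R[i].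

Lemma Re_mxtrace_diagR_test_bounds N (P : 'I_N -> R) (T : 'M[C]_N) om :
  distribution P -> test T ->
  P om * complex.Re (T om om) <= complex.Re (\tr (diagR P *m T))
    <= 1 - P om * (1 - complex.Re (T om om)).
Proof.
move=> [P0 P1] hT; have Tunit i := Re_test_diag_in01 i hT.
rewrite Re_mxtrace_diagR_mul (bigD1 om) //=.
rewrite (bigD1 om) //= in P1.
have rest_ge0 : 0 <= \sum_(i | i != om) P i * complex.Re (T i i).
  by apply: sumr_ge0 => i _; case/andP: (Tunit i) => T0 _; rewrite mulr_ge0.
have rest_le : \sum_(i | i != om) P i * complex.Re (T i i) <= \sum_(i | i != om) P i.
  by apply: ler_sum => i _; case/andP: (Tunit i) => _ T1; rewrite ler_piMr.
by apply/andP; split; lra.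
Qed.

Lemma meas_diagR N (P : 'I_N -> R) (T : 'M[C]_N) : distribution P ->
  meas T (diagR P) = bern (complex.Re (\tr (diagR P *m T))).
Proof.
move=> [_ P1]; apply/funext => i; rewrite /meas /bern; case: ifP => // _.
rewrite mulmxBr mulmx1 linearB /= -P1 -Re_mxtrace_diagR.
by case: (\tr (diagR P)) => ? ?; case: (\tr (diagR P *m T)).
Qed.

Lemma Dtest_diagR_le alpha N (P Q : 'I_N -> R) om : 0 < alpha < 1 ->
  distribution P -> distribution Q -> 0 < P om -> Q om = P om ->
  (Dtest alpha (diagR P) (diagR Q) <=
    ((alpha - 1)^-1 * (Num.max alpha (1 - alpha) * ln (P om / 4)))%:E)%E.
Proof.
move=> ha dP dQ Pom_gt0 QPom; apply: ge_ereal_sup => _ [T hT <-].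
rewrite (meas_diagR T dP) (meas_diagR T dQ).
have /andP[t0 t1] := Re_test_diag_in01 om hT.
set t := complex.Re (T om om).
have -> : P om = P om * t + P om * (1 - t) by ring.
apply: renyi_bern_le; rewrite ?mulr_ge0 ?subr_ge0 ?(ltW Pom_gt0) //.
- by rewrite -mulrDr subrKC mulr1.
- exact: Re_mxtrace_diagR_test_bounds.
- by rewrite -QPom; exact: Re_mxtrace_diagR_test_bounds.
Qed.

End TestBound.

Section TensorPowers.
Variable R : realType.

Lemma tensmx_diagR m n (P : 'I_m -> R) (Q : 'I_n -> R) :
  diagR P *t diagR Q =
  diagR (fun k => P (mxtens_unindex k).1 * Q (mxtens_unindex k).2).
Proof.
apply/matrixP => k l.
case: (mxtens_indexP k) => i j; case: (mxtens_indexP l) => i' j'.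
rewrite tensmxE /diagR !mxE !mxtens_indexK /=.
rewrite (inj_eq (can_inj (@mxtens_indexK _ _))) xpair_eqE /RC.
case: (i == i'); case: (j == j'); rewrite /= ?mulr0n ?mulr1n ?mul0r ?mulr0 //.
by apply/eqP; rewrite eq_complex /= !mulr0 !mul0r subr0 addr0 !eqxx.
Qed.

Fixpoint ntens_index N (i : 'I_N) k : 'I_(N ^ k.+1) :=
  if k is k'.+1 then mxtens_index (i, ntens_index i k') else i.

Lemma ntensmx_diagR N (P : 'I_N -> R) i k : distribution P ->
  exists2 Pk : 'I_(N ^ k.+1) -> R, diagR P ^t k.+1 = diagR Pk &
    distribution Pk /\ Pk (ntens_index i k) = P i ^+ k.+1.
Proof.
move=> [P0 P1]; elim: k => [|k [Pk ePk [[Pk0 Pk1] Pki]]].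
  by exists P; rewrite ?expr1.
exists (fun l => P (mxtens_unindex l).1 * Pk (mxtens_unindex l).2).
  by rewrite ntensmxSS ePk tensmx_diagR.
split; first by split=> [l|]; rewrite ?mulr_ge0 // -mxtens.mulr_sum P1 Pk1 mulr1.
by rewrite (mxtens_indexK (i, ntens_index i k)) /= Pki -exprS.
Qed.

Lemma Dtest_term_le alpha N (P Q : 'I_N -> R) om n : 0 < alpha < 1 ->
  distribution P -> distribution Q -> 0 < P om -> Q om = P om ->
  (Dtest_term alpha (diagR P) (diagR Q) n <=
    ((alpha - 1)^-1 * (Num.max alpha (1 - alpha) * ln (P om / 4)))%:E)%E.
Proof.
move=> ha dP dQ Pom0 QPom; rewrite /Dtest_term.
have [a0 a1] := andP ha.
have [Pn -> [dPn Pnom]] := ntensmx_diagR om n dP.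
have [Qn -> [dQn Qnom]] := ntensmx_diagR om n dQ.
have Pnom0 : 0 < Pn (ntens_index om n) by rewrite Pnom exprn_gt0.
have QnPn : Qn (ntens_index om n) = Pn (ntens_index om n) by rewrite Qnom Pnom QPom.
have bound := Dtest_diagR_le ha dPn dQn Pnom0 QnPn.
apply: le_trans (lee_wpmul2l _ bound) _; first by rewrite lee_fin invr_ge0.
rewrite Pnom -EFinM lee_fin.
set m := Num.max alpha (1 - alpha).
have m0 : 0 <= m by rewrite le_max ltW.
have ln4_0 : 0 <= ln (4 : R) by rewrite ln_ge0 // (ler_nat _ 1 4).
have -> : ln (P om ^+ n.+1 / 4) = n.+1%:R * ln (P om) - ln 4.
  by rewrite lnM ?posrE ?exprn_gt0 ?invr_gt0 // lnXn // lnV ?posrE // mulr_natl.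
set k := n.+1%:R.
have -> : k^-1 * ((alpha - 1)^-1 * (m * (k * ln (P om) - ln 4))) =
          (alpha - 1)^-1 * (m * (ln (P om) - ln 4 / k)).
  by field; rewrite addrC natr1 pnatr_eq0 subr_eq0 (lt_eqF a1).
rewrite ler_nM2l ?invr_lt0 ?subr_lt0 //; apply: ler_wpM2l => //.
rewrite lnM ?posrE ?invr_gt0 // lnV ?posrE // lerD2l lerN2.
by rewrite ler_pdivrMr ?ltr0Sn // ler_peMr // (ler_nat _ 1).
Qed.

End TensorPowers.

Section OverlappingSupports.
Variable R : realType.

Definition overlap_left (w : R) (i : 'I_3) : R := nth 0 [:: 1 - w; w; 0] i.
Definition overlap_right (w : R) (i : 'I_3) : R := nth 0 [:: 0; w; 1 - w] i.

Lemma distribution_overlap (w : R) : 0 <= w <= 1 ->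
  distribution (overlap_left w) /\ distribution (overlap_right w).
Proof.
move=> /andP[w0 w1]; rewrite /distribution !big_ord_recl big_ord0 /=.
by split; split=> [[[|[|[|]]] ?]|];
  rewrite /overlap_left /overlap_right //= ?subr_ge0 //; ring.
Qed.

Lemma renyi_overlap alpha (w : R) : 0 < alpha < 1 -> 0 < w ->
  renyi alpha (overlap_left w) (overlap_right w) = ((alpha - 1)^-1 * ln w)%:E.
Proof.
move=> /andP[a0 a1] w0.
have ww : w `^ alpha * w `^ (1 - alpha) = w.
  rewrite -powRD; last by rewrite (gt_eqF w0) implybT.
  by rewrite addrC subrK powRr1 // ltW.
rewrite /renyi !big_ord_recl big_ord0 /overlap_left /overlap_right /=.
have a0' : alpha != 0 by rewrite gt_eqF.
have a1' : 1 - alpha != 0 by rewrite subr_eq0 eq_sym lt_eqF.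
rewrite !powR0 // mulr0 mul0r ww !add0r addr0 (gt_eqF w0) a1 /=.
by rewrite ltNge (ltW a1).
Qed.

Lemma exists_ln_lt_mul_ln_quarter (m : R) : m < 1 ->
  exists2 w : R, 0 < w <= 1 & ln w < m * ln (w / 4).
Proof.
move=> m1; have ln4_gt0 : 0 < ln (4 : R) by rewrite ln_gt0 // (ltr_nat _ 1 4).
have m1_gt0 : 0 < 1 - m by rewrite subr_gt0.
exists (expR (- (ln 4 / (1 - m)))).
  by rewrite expR_gt0 expR_le1 oppr_le0 divr_ge0 ?ltW.
rewrite lnM ?posrE ?expR_gt0 ?invr_gt0 // lnV ?posrE // expRK.
set L := ln 4 / (1 - m).
have eL : L * (1 - m) = ln 4 by rewrite divfK ?gt_eqF.
nra.
Qed.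

End OverlappingSupports.

Theorem mainTheorem4 (R : realType) (alpha : R) :
  0 < alpha < 1 ->
  ~ quantum_renyi alpha (@Dbar_test R alpha) /\
  ~ quantum_renyi alpha (@Dhat_test R alpha).
Proof.
move=> ha; have [a0 a1] := andP ha.
set m := Num.max alpha (1 - alpha).
have m_lt1 : m < 1 by rewrite gt_max; apply/andP; split; lra.
have [w /andP[w0 w1] gap] := exists_ln_lt_mul_ln_quarter m_lt1.
have [dP dQ] : distribution (overlap_left w) /\ distribution (overlap_right w).
  by apply: distribution_overlap; rewrite (ltW w0) w1.
set c := (alpha - 1)^-1 * (m * ln (w / 4)).
have term_le n : (Dtest_term alpha (diagR (overlap_left w))
                   (diagR (overlap_right w)) n <= c%:E)%E.
  exact: (Dtest_term_le (om := 1) n ha dP dQ w0).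
have c_lt : c < (alpha - 1)^-1 * ln w by rewrite ltr_nM2l // invr_lt0 subr_lt0.
have not_qr (D : forall d, 'M[R[i]]_d -> 'M_d -> \bar R) :
    (D 3%N (diagR (overlap_left w)) (diagR (overlap_right w)) <= c%:E)%E ->
    ~ quantum_renyi alpha D.
  move=> Dle /quantum_renyi_diagR/(_ dP dQ) eqD.
  by move: Dle; rewrite eqD renyi_overlap // lee_fin leNgt c_lt.
split; apply: not_qr.
- rewrite /Dbar_test limn_esup_lim; apply: lime_le; first exact: is_cvg_esups.
  by apply: nearW => k; apply: ge_ereal_sup => _ [j _ <-].
- by apply: ge_ereal_sup => _ [n _ <-].
Qed.
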